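(* Let $G$ be a finite simple graph on vertex set $\mathcal C$ with a disjoint decomposition $\mathcal C=\mathcal C_I\cup\mathcal C_M\cup\mathcal C_O$, where $|\mathcal C_I|=|\mathcal C_O|=n$, the input qudits are labelled $\mathcal C_I=\{I_1,\dots,I_n\}$ and the output qudits $\mathcal C_O=\{O_1,\dots,O_n\}$. Let $|\phi\rangle_{\mathcal C}$ be the cluster state of $G$ and $S$ its generator. For each $a\in\mathcal C_M$ fix a unitary $u_a$ on $\mathbb C^d$ and an outcome $s_a\in\mathbb Z_d$, and let $P=\bigotimes_{a\in\mathcal C_M}u_a|s_a\rangle\langle s_a|u_a^{\dagger}$. Let $U$ be a unitary on $(\mathbb C^d)^{\otimes n}$, acting on $\mathcal C_O$ with the $i$-th tensor factor identified with $O_i$; for an operator $A$ on $(\mathbb C^d)^{\otimes n}$ write $(A)_{\mathcal C_O}$ for this action. Suppose that $|\psi\rangle=P|\phi\rangle_{\mathcal C}$ is nonzero and satisfies, for some $\lambda_{x,i},\lambda_{z,i}\in\mathbb Z_d$ and all $1\le i\le n$, $$X_{I_i}\,(UX_iU^{\dagger})_{\mathcal C_O}|\psi\rangle=q^{-\lambda_{x,i}}|\psi\rangle,\qquad Z_{I_i}^{\dagger}\,(UZ_iU^{\dagger})_{\mathcal C_O}|\psi\rangle=q^{-\lambda_{z,i}}|\psi\rangle,$$ where $X_i,Z_i$ act on the $i$-th factor of $(\mathbb C^d)^{\otimes n}$. Then for all outcomes $s_{I_1},\dots,s_{I_n}\in\mathbb Z_d$ there is a nonzero constant $c\in\mathbb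 C$ such that for every input state $|\psi(\mathrm{in})\rangle$ on $\mathcal C_I$, $$\Big(\bigotimes_{i=1}^n|x(s_{I_i})\rangle\langle x(s_{I_i})|_{I_i}\Big)\,P\;S\big(|\psi(\mathrm{in})\rangle_{\mathcal C_I}\otimes|+\rangle_{\mathcal C_M\cup\mathcal C_O}\big)=c\,\Big(\bigotimes_{i}|x(s_{I_i})\rangle_{I_i}\Big)\otimes\Big(\bigotimes_{a\in\mathcal C_M}u_a|s_a\rangle_a\Big)\otimes|\psi(\mathrm{out})\rangle_{\mathcal C_O},$$ where $|\psi(\mathrm{out})\rangle=U\,U_\Sigma|\psi(\mathrm{in})\rangle$ (with $|\psi(\mathrm{in})\rangle$ transported to $\mathcal C_O$ via $I_i\mapsto O_i$) and $$U_\Sigma=\bigotimes_{i=1}^{n}Z_i^{-\lambda_{x,i}-s_{I_i}}X_i^{\lambda_{z,i}}.$$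
   Context: Fix an integer $d\ge 2$ and $q=e^{2\pi i/d}$. A qudit has Hilbert space $\mathbb C^d$ with orthonormal basis $\{|k\rangle:k\in\mathbb Z_d\}$; $Z|k\rangle=q^k|k\rangle$, $X|k\rangle=|k-1\bmod d\rangle$ (so $XZ=qZX$); $|x(j)\rangle=d^{-1/2}\sum_k q^{jk}|k\rangle$, the eigenvector of $X$ with eigenvalue $q^j$. A subscript $a$ on an operator/state means it acts on/belongs to qudit $a$. For qudits $a,b$, $S_{ab}|j\rangle_a|k\rangle_b=q^{jk}|j\rangle_a|k\rangle_b$. For a graph $G$ on vertex set $\mathcal C$, the cluster state generator is $S=\prod_{\{a,b\}\in E(G)}S_{ab}$, $|+\rangle_{A}=\bigotimes_{a\in A}|x(0)\rangle_a$, and the cluster state is $|\phi\rangle_{\mathcal C}=S|+\rangle_{\mathcal C}$; it satisfies $X_a^\dagger\bigotimes_{b\text{ neighbour of }a}Z_b|\phi\rangle_{\mathcal C}=|\phi\rangle_{\mathcal C}$ for all $a$. Measuring qudit $a$ ''in pattern $u_aZu_a^\dagger$'' means measuring in the basis $\{u_a|s\rangle\}_{s\in\mathbb Z_d}$, outcome $s$ corresponding to $u_a|s\rangle$; input qudits are measured in the eigenbasis of $X$, outcome $s$ corresponding to $|x(s)\rangle$. *)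

From HB Require Import structures.
From mathcomp Require Import all_boot all_order all_algebra.
From mathcomp Require Import reals trigo.
From mathcomp Require Import complex.
Set Implicit Arguments. Unset Strict Implicit. Unset Printing Implicit Defensive.
Import Order.TTheory GRing.Theory Num.Theory.
Local Open Scope ring_scope.

Section Qudit.
Variables (R : realType) (d : nat).
Local Notation C := (complex R).

Definition qroot : C := ((cos (2 * pi / d%:R)) +i* (sin (2 * pi / d%:R)))%C.

(* basis configurations of a register of qudits indexed by the finite type T;
   qudit labels are elements of Z_d *)
Definition cfg (T : finType) := {ffun T -> 'Z_d}.
(* vectors of (C^d)^{tensor T}, as coefficient functions on the basis *)
Definition vec (T : finType) := cfg T -> C.
Definition mat (T : finType) := T -> T -> C.

Definition mulm (T : finType) (A B : mat T) : mat T :=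
  fun j k => \sum_(l : T) A j l * B l k.
Definition adjm (T : finType) (A : mat T) : mat T := fun j k => (A k j)^*.
Definition idm (T : finType) : mat T := fun j k => (j == k)%:R.
Definition unitary (T : finType) (A : mat T) : Prop :=
  mulm (adjm A) A = @idm T /\ mulm A (adjm A) = @idm T.

(* X|k> = |k-1> ;  Z|k> = q^k |k> *)
Definition Xm : mat 'Z_d := fun j k => (j == k - 1)%:R.
Definition Zm : mat 'Z_d := fun j k => (j == k)%:R * qroot ^+ k.
Definition xst (j : 'Z_d) : 'Z_d -> C :=
  fun k => (sqrtC (d%:R : C))^-1 * qroot ^+ (j * k)%N.
Definition projm (v : 'Z_d -> C) : mat 'Z_d := fun j k => v j * (v k)^*.

Definition upd (T : finType) (x : cfg T) (a : T) (k : 'Z_d) : cfg T :=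
  [ffun b => if b == a then k else x b].
Definition op1 (T : finType) (a : T) (A : mat 'Z_d) (w : vec T) : vec T :=
  fun x => \sum_(k : 'Z_d) A (x a) k * w (upd x a k).
Definition opfam (J T : finType) (s : seq J) (site : J -> T)
  (M : J -> mat 'Z_d) (w : vec T) : vec T :=
  foldr (fun j f => op1 (site j) (M j) f) w s.

Definition mxop (T : finType) (A : mat (cfg T)) (w : vec T) : vec T :=
  fun x => \sum_(y : cfg T) A x y * w y.
Definition matof (T : finType) (f : vec T -> vec T) : mat (cfg T) :=
  fun x y => f (fun z => (z == y)%:R) x.

(* (A)_{C_O}: operator A on (C^d)^{tensor n} acting on the qudits O 0,...,O (n-1) *)
Definition updO (n : nat) (V : finType) (O : 'I_n -> V) (x : cfg V)
  (y : cfg 'I_n) : cfg V :=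
  [ffun b => if [pick i | O i == b] is Some i then y i else x b].
Definition liftO (n : nat) (V : finType) (O : 'I_n -> V)
  (A : mat (cfg 'I_n)) (w : vec V) : vec V :=
  fun x => \sum_(y : cfg 'I_n) A [ffun i => x (O i)] y * w (updO O x y).

(* cluster state generator S = prod_{{a,b} in E} S_ab,
   graph given by its edge set E (each edge a 2-element vertex set) *)
Definition Sop (V : finType) (E : {set {set V}}) (w : vec V) : vec V :=
  fun x => (\prod_(e in E) qroot ^+ (\prod_(a in e) (x a : nat))%N) * w x.
Definition plusV (V : finType) : vec V := fun x => \prod_(a : V) xst 0 (x a).
Definition cluster (V : finType) (E : {set {set V}}) : vec V := Sop E (@plusV V).
Definition embed_in (n : nat) (V : finType) (I : 'I_n -> V) (CM CO : {set V})
  (psin : vec 'I_n) : vec V :=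
  fun x => psin [ffun i => x (I i)] * \prod_(a in CM :|: CO) xst 0 (x a).
Definition Pop (V : finType) (CM : {set V}) (u : V -> mat 'Z_d) (sM : V -> 'Z_d)
  (w : vec V) : vec V :=
  opfam (enum CM) id (fun a => projm (fun k => u a k (sM a))) w.
Definition USigma (n : nat) (lx lz s : 'I_n -> 'Z_d) (w : vec 'I_n) : vec 'I_n :=
  foldr (fun i f => iter (- lx i - s i)%R (op1 i Zm) (iter (lz i) (op1 i Xm) f))
    w (enum 'I_n).
End Qudit.

From HB Require Import structures.
From mathcomp Require Import all_boot all_order all_algebra.
From mathcomp Require Import reals trigo.
From mathcomp Require Import complex.
From mathcomp Require Import ring lra.
From Stdlib Require Import FunctionalExtensionality.
Set Implicit Arguments. Unset Strict Implicit. Unset Printing Implicit Defensive.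
Import Order.TTheory GRing.Theory Num.Theory.
Local Open Scope ring_scope.

(* Let eta := (U^dagger)_O psi.  The hypotheses say that eta is stabilized, up to
   the phases q^(-lx_i) and q^(-lz_i), by X_(I_i) X_(O_i) and Z_(I_i)^dagger Z_(O_i):
   the Z-conditions confine eta to the configurations with z_(O_i) = z_(I_i) - lz_i,
   and along that diagonal the X-conditions make eta a character in z_I times its
   value at z_I = 0.  Since psi, hence eta, factors as the product of the measured
   states u_a|s_a> with a function of the other qudits, this determines psi:
   psi(y) = c0 * prod_a <y_a|u_a|s_a> * q^(-lx . y_I) * <y_O|U|y_I - lz>, with
   c0 <> 0 because psi <> 0.  As S is diagonal and |+> has constant amplitudes,
   P S (psin (x) |+>) is psin(y_I) psi(y) up to a constant, and projecting each I_i
   onto |x(s_i)> sums y_(I_i) against q^(-s_i y_(I_i)); the substitution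
   b = y_I - lz turns the result into U applied to prod_i Z_i^(-lx_i - s_i) X_i^(lz_i)
   psin.  Neither the edges of the graph nor the unitarity of the u_a play a role. *)

Section Qudit.
Variables (R : realType) (p : nat).
Local Notation d := p.+2.
Local Notation C := (complex R).
Local Notation q := (qroot R d).

Lemma qroot_expE k :
  q ^+ k = ((cos (k%:R * (2 * pi / d%:R))) +i* (sin (k%:R * (2 * pi / d%:R))))%C.
Proof.
set th := 2 * pi / d%:R.
elim: k => [|k IH]; first by rewrite expr0 mul0r cos0 sin0.
rewrite exprSr IH /qroot -/th -[k.+1]addn1 natrD mulrDl mul1r cosD sinD.
by congr (_ +i* _)%C; ring.
Qed.

Lemma qroot_exp_d : q ^+ d = 1.
Proof.
by rewrite qroot_expE mulrCA mulfV ?pnatr_eq0 // mulr1 mulr_natl cos2pi sin2pi.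
Qed.

Lemma qroot_exp_mod m : q ^+ m = q ^+ (m %% d).
Proof. by rewrite {1}(divn_eq m d) exprD mulnC exprM qroot_exp_d expr1n mul1r. Qed.

Lemma qroot_mulC : q * q^* = 1.
Proof.
apply/eqP; rewrite eq_complex /=; apply/andP; split; apply/eqP.
  by rewrite mulrN opprK -!expr2 cos2Dsin2.
by rewrite mulrN mulrC addNr.
Qed.

(* With x := k pi / d in ]0, pi[, q^k = 1 gives cos (2 x) = 1, hence sin x = 0. *)
Lemma qroot_exp_eq1 k : (k < d)%N -> q ^+ k = 1 -> k = 0%N.
Proof.
case: k => // k hk; rewrite qroot_expE => /eqP; rewrite eq_complex /= => /andP [/eqP hc _].
exfalso.
pose x : R := k.+1%:R / d%:R * pi.
have hx : k.+1%:R * (2 * pi / d%:R) = x *+ 2.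
  by rewrite /x -mulr_natr; field; rewrite -natrD pnatr_eq0.
have hx0 : 0 < x < pi.
  have h1 : 0 < k.+1%:R / d%:R :> R by rewrite divr_gt0 ?ltr0n.
  have h2 : k.+1%:R / d%:R < 1 :> R by rewrite ltr_pdivrMr ?ltr0n // mul1r ltr_nat.
  apply/andP; split; first by rewrite mulr_gt0 ?pi_gt0.
  by rewrite -[X in _ < X]mul1r ltr_pM2r ?pi_gt0.
move: hc; rewrite hx cos_mulr2n => h.
have : sin x ^+ 2 = 0 by rewrite sin2cos2; move: h; rewrite mulr2n; lra.
move/eqP; rewrite expf_eq0 /= => /eqP hs.
by have := sin_gt0_pi hx0; rewrite hs ltxx.
Qed.

Definition qexp (a : 'Z_d) : C := q ^+ a.

Lemma qexpD a b : qexp (a + b) = qexp a * qexp b.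
Proof. by rewrite /qexp /= -qroot_exp_mod exprD. Qed.

Lemma qexpM (a b : 'Z_d) : qexp (a * b) = q ^+ (a * b)%N.
Proof. by rewrite /qexp /= -qroot_exp_mod. Qed.

Lemma qexp0 : qexp 0 = 1.
Proof. by rewrite /qexp expr0. Qed.

Lemma qexpNr a : qexp (- a) * qexp a = 1.
Proof. by rewrite -qexpD addNr qexp0. Qed.

Lemma qexp_neq0 a : qexp a != 0.
Proof. by apply: contra_eq_neq (qexpNr a) => ->; rewrite mulr0 eq_sym oner_neq0. Qed.

Lemma qexpN a : qexp (- a) = (qexp a)^-1.
Proof. by apply: (mulIf (qexp_neq0 a)); rewrite qexpNr mulVf ?qexp_neq0. Qed.

Lemma qexp_inj : injective qexp.
Proof.
move=> a b hab; apply/eqP; rewrite -subr_eq0; apply/eqP/val_inj.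
by apply: qroot_exp_eq1 (ltn_ord _) _; rewrite -/(qexp _) qexpD hab qexpN mulfV ?qexp_neq0.
Qed.

Lemma qexp_conj a : (qexp a)^* = qexp (- a).
Proof.
have h : qexp a * (qexp a)^* = 1 by rewrite /qexp rmorphXn -exprMn qroot_mulC expr1n.
by apply: (mulfI (qexp_neq0 a)); rewrite h mulrC qexpNr.
Qed.

Lemma qexpXn a m : qexp a ^+ m = qexp (a * m%:R).
Proof.
elim: m => [|m IH]; first by rewrite expr0 mulr0 qexp0.
by rewrite exprS IH -qexpD -[m.+1]addn1 natrD mulrDr mulr1 addrC.
Qed.

Lemma sum_delta_l (T : finType) (t : T) (F : T -> C) :
  \sum_(l : T) (t == l)%:R * F l = F t.
Proof.
rewrite (bigD1 t) //= eqxx mul1r big1 ?addr0 // => l hl.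
by rewrite eq_sym (negbTE hl) mul0r.
Qed.

Lemma sum_delta_r (T : finType) (t : T) (F : T -> C) :
  \sum_(l : T) (l == t)%:R * F l = F t.
Proof. by rewrite -(sum_delta_l t); apply: eq_bigr => l _; rewrite eq_sym. Qed.

Section SingleSite.
Variable T : finType.
Implicit Types (x : cfg d T) (a b : T) (k : 'Z_d) (w : vec R d T).

Lemma upd_at x a k : upd x a k a = k.
Proof. by rewrite ffunE eqxx. Qed.

Lemma upd_ne x a k b : b != a -> upd x a k b = x b.
Proof. by move=> h; rewrite ffunE (negbTE h). Qed.

Lemma upd_id x a : upd x a (x a) = x.
Proof. by apply/ffunP => b; rewrite ffunE; case: eqP => // ->. Qed.

Lemma upd_upd x a k k' : upd (upd x a k) a k' = upd x a k'.
Proof. by apply/ffunP => b; rewrite !ffunE; case: eqP. Qed.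

Lemma op1_X a w x : op1 a (@Xm R d) w x = w (upd x a (x a + 1)).
Proof.
rewrite /op1 -(sum_delta_r (x a + 1) (fun k => w (upd x a k))).
by apply: eq_bigr => k _; rewrite /Xm eq_sym subr_eq.
Qed.

Lemma op1_Z a w x : op1 a (@Zm R d) w x = qexp (x a) * w x.
Proof.
rewrite /op1; transitivity (\sum_k (x a == k)%:R * (qexp k * w (upd x a k))).
  by apply: eq_bigr => k _; rewrite mulrA.
by rewrite sum_delta_l upd_id.
Qed.

Lemma op1_adjZ a w x : op1 a (adjm (@Zm R d)) w x = qexp (- x a) * w x.
Proof.
rewrite /op1 -qexp_conj.
transitivity (\sum_k (k == x a)%:R * ((qexp (x a))^* * w (upd x a k))).
  by apply: eq_bigr => k _; rewrite /adjm /Zm rmorphM /= conjC_nat mulrA.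
by rewrite sum_delta_r upd_id.
Qed.

Lemma op1_proj a (v : 'Z_d -> C) w x :
  op1 a (projm v) w x = v (x a) * \sum_k (v k)^* * w (upd x a k).
Proof. by rewrite /op1 mulr_sumr; apply: eq_bigr => k _; rewrite /projm mulrA. Qed.

Lemma op1_sum a A (B : finType) (F : B -> vec R d T) x :
  op1 a A (fun y => \sum_(b : B) F b y) x = \sum_b op1 a A (F b) x.
Proof. by rewrite /op1 exchange_big /=; apply: eq_bigr => k _; rewrite mulr_sumr. Qed.

Lemma op1_mull a A (h : cfg d T -> C) w :
  (forall x k, h (upd x a k) = h x) ->
  op1 a A (fun y => h y * w y) = fun x => h x * op1 a A w x.
Proof.
move=> hh; apply: functional_extensionality => x; rewrite /op1 mulr_sumr.
by apply: eq_bigr => k _; rewrite hh mulrCA.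
Qed.

End SingleSite.

Lemma matof_conj (T : finType) (U U' : mat R (cfg d T)) i (M : mat R 'Z_d) :
  matof (fun w => mxop U (op1 i M (mxop U' w))) = mulm U (mulm (matof (op1 i M)) U').
Proof.
apply: functional_extensionality => x; apply: functional_extensionality => y.
rewrite /matof /mulm /mxop; apply: eq_bigr => z _; congr (_ * _).
rewrite /op1; transitivity (\sum_k M (z i) k * U' (upd z i k) y).
  apply: eq_bigr => k _; congr (_ * _).
  by rewrite -(sum_delta_r y (U' (upd z i k))); apply: eq_bigr => l _; exact: mulrC.
under [RHS]eq_bigr => l _ do rewrite mulr_suml.
rewrite exchange_big /=; apply: eq_bigr => k _.
rewrite -(sum_delta_l (upd z i k) (fun l => M (z i) k * U' l y)).
by apply: eq_bigr => l _; rewrite mulrAC mulrC.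
Qed.

Section Families.
Variables (J T : finType) (site : J -> T) (M : J -> mat R 'Z_d).
Implicit Types (l : seq J) (w : vec R d T).

Lemma opfam_mull l (h : cfg d T -> C) w :
  (forall j x k, j \in l -> h (upd x (site j) k) = h x) ->
  opfam l site M (fun y => h y * w y) = fun x => h x * opfam l site M w x.
Proof.
elim: l => [|j l IH] hh //=.
rewrite IH; last by move=> j' x k hj; apply: hh; rewrite inE hj orbT.
by apply: op1_mull => x k; apply: hh; rewrite inE eqxx.
Qed.

Lemma opfam_sum l (B : finType) (F : B -> vec R d T) :
  opfam l site M (fun y => \sum_b F b y) = fun x => \sum_b opfam l site M (F b) x.
Proof.
elim: l => [|j l IH] //=; rewrite IH.
by apply: functional_extensionality => x; rewrite op1_sum.
Qed.

End Families.

Lemma opfam_proj_factor (T : finType) (v : T -> 'Z_d -> C) (l : seq T) (w : vec R d T) :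
  uniq l -> exists K : cfg d T -> C,
    (forall x y : cfg d T, (forall b, b \notin l -> x b = y b) -> K x = K y) /\
    forall x, opfam l id (fun a => projm (v a)) w x = (\prod_(a <- l) v a (x a)) * K x.
Proof.
elim: l => [|a l IH] /=.
  move=> _; exists w; split => [x y h|x]; last by rewrite big_nil mul1r.
  by congr w; apply/ffunP => b; exact: h.
move=> /andP [hal /IH [K [hK hw]]].
exists (fun x => \sum_k (v a k)^* * K (upd x a k)); split.
  move=> x y hxy; apply: eq_bigr => k _; congr (_ * _); apply: hK => b hb.
  rewrite !ffunE; case: eqP => // /eqP hba; apply: hxy.
  by rewrite inE negb_or hba hb.
move=> x; rewrite op1_proj big_cons -mulrA; congr (_ * _).
rewrite mulr_sumr; apply: eq_bigr => k _; rewrite hw mulrCA; congr (_ * _).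
apply: eq_big_seq => b hb; rewrite upd_ne //.
by apply: contraNneq hal => <-.
Qed.

Section OutputRegister.
Variables (n : nat) (V : finType) (O : 'I_n -> V).
Hypothesis O_inj : injective O.
Implicit Types (x : cfg d V) (y z : cfg d 'I_n) (w : vec R d V) (A B : mat R (cfg d 'I_n)).
Local Notation prO x := [ffun i => x (O i)].

Lemma updO_at x y i : updO O x y (O i) = y i.
Proof.
rewrite ffunE; case: pickP => [j /eqP /O_inj -> //|/(_ i)].
by rewrite eqxx.
Qed.

Lemma updO_out x y b : (forall i, O i != b) -> updO O x y b = x b.
Proof. by move=> h; rewrite ffunE; case: pickP => [j hj|//]; have := h j; rewrite hj. Qed.

Lemma prO_updO x y : prO (updO O x y) = y.
Proof. by apply/ffunP => i; rewrite ffunE updO_at. Qed.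

Lemma updO_updO x y z : updO O (updO O x y) z = updO O x z.
Proof.
apply/ffunP => b; rewrite {1}/updO ffunE; case: pickP => [j /eqP <-|h].
  by rewrite updO_at.
by rewrite !updO_out // => i; rewrite h.
Qed.

Lemma updO_prO x : updO O x (prO x) = x.
Proof. by apply/ffunP => b; rewrite ffunE; case: pickP => [j /eqP <-|//]; rewrite ffunE. Qed.

Lemma updO_upd x b k y : (forall i, O i != b) ->
  updO O (upd x b k) y = upd (updO O x y) b k.
Proof.
move=> hb; apply/ffunP => c; rewrite !ffunE.
by case: pickP => [j /eqP <-|//]; rewrite (negbTE (hb j)).
Qed.

Lemma prO_upd x b k : (forall i, O i != b) -> prO (upd x b k) = prO x.
Proof. by move=> hb; apply/ffunP => i; rewrite !ffunE (negbTE (hb i)). Qed.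

Lemma updO_upd_prO x i k : updO O x (upd (prO x) i k) = upd x (O i) k.
Proof.
apply/ffunP => b; rewrite !ffunE; case: pickP => [j /eqP <-|h].
  by rewrite !ffunE (inj_eq O_inj); case: eqP.
by case: eqP => // hb; have := h i; rewrite hb eqxx.
Qed.

Lemma liftO_mulm A B w : liftO O A (liftO O B w) = liftO O (mulm A B) w.
Proof.
apply: functional_extensionality => x; rewrite /liftO /mulm.
under eq_bigr => y _ do rewrite prO_updO mulr_sumr.
rewrite exchange_big /=; apply: eq_bigr => z _.
by rewrite mulr_suml; apply: eq_bigr => y _; rewrite updO_updO mulrA.
Qed.

Lemma liftO_idm w : liftO O (@idm R _) w = w.
Proof.
apply: functional_extensionality => x.
by rewrite /liftO (sum_delta_l (prO x) (fun y => w (updO O x y))) updO_prO.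
Qed.

Lemma liftO_unitaryK A w : unitary A -> liftO O A (liftO O (adjm A) w) = w.
Proof. by case=> _ hA; rewrite liftO_mulm hA liftO_idm. Qed.

Lemma liftO_unitaryVK A w : unitary A -> liftO O (adjm A) (liftO O A w) = w.
Proof. by case=> hA _; rewrite liftO_mulm hA liftO_idm. Qed.

Lemma liftO_scale A (c : C) w : liftO O A (fun x => c * w x) = fun x => c * liftO O A w x.
Proof.
apply: functional_extensionality => x; rewrite /liftO mulr_sumr.
by apply: eq_bigr => y _; rewrite mulrCA.
Qed.

Lemma liftO_op1 A b (M : mat R 'Z_d) w : (forall i, O i != b) ->
  liftO O A (op1 b M w) = op1 b M (liftO O A w).
Proof.
move=> hb; apply: functional_extensionality => x; rewrite /liftO /op1.
under eq_bigr => y _ do rewrite mulr_sumr.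
rewrite exchange_big /=; apply: eq_bigr => k _.
rewrite mulr_sumr prO_upd //; apply: eq_bigr => y _.
by rewrite updO_out // updO_upd // mulrCA.
Qed.

Lemma liftO_matof_op1 i (M : mat R 'Z_d) w : liftO O (matof (op1 i M)) w = op1 (O i) M w.
Proof.
apply: functional_extensionality => x; rewrite /liftO /matof /op1.
under eq_bigr => y _ do rewrite mulr_suml.
rewrite exchange_big /=; apply: eq_bigr => k _; rewrite ffunE.
transitivity (\sum_y (upd (prO x) i k == y)%:R * (M (x (O i)) k * w (updO O x y))).
  by apply: eq_bigr => y _; ring.
by rewrite sum_delta_l updO_upd_prO.
Qed.

Lemma liftO_opfam A (J : finType) (l : seq J) (site : J -> V) M w :
  (forall j i, j \in l -> O i != site j) ->
  liftO O A (opfam l site M w) = opfam l site M (liftO O A w).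
Proof.
elim: l => [|j l IH] //= hl.
rewrite liftO_op1 ?IH // => [j' i hj'|i]; apply: hl; rewrite inE ?hj' ?orbT //.
by rewrite eqxx.
Qed.

Lemma liftO_stabilizer (U : mat R (cfg d 'I_n)) (i : 'I_n) b (M N : mat R 'Z_d) w (c : C) :
  unitary U -> (forall j, O j != b) ->
  op1 b M (liftO O (matof (fun f => mxop U (op1 i N (mxop (adjm U) f)))) w)
    = (fun x => c * w x) ->
  op1 b M (op1 (O i) N (liftO O (adjm U) w)) = fun x => c * liftO O (adjm U) w x.
Proof.
move=> hU hb /(congr1 (liftO O (adjm U))); rewrite liftO_op1 // liftO_scale => <-.
by rewrite matof_conj -!liftO_mulm liftO_unitaryVK // liftO_matof_op1.
Qed.

End OutputRegister.

Lemma opfam_proj_prod (n : nat) (V : finType) (I : 'I_n -> V) (I_inj : injective I)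
    (v g : 'I_n -> 'Z_d -> C) (h : cfg d V -> C) (l : seq 'I_n) :
  uniq l -> (forall i x k, h (upd x (I i) k) = h x) ->
  opfam l I (fun i => projm (v i)) (fun y => h y * \prod_i g i (y (I i))) =
  fun x => h x * \prod_i (if i \in l then v i (x (I i)) * \sum_k (v i k)^* * g i k
                          else g i (x (I i))).
Proof.
move=> hl hh; elim: l hl => [|j l IH] /=.
  by move=> _; apply: functional_extensionality => x; congr (_ * _); apply: eq_bigr.
move=> /andP [hjl /IH ->]; apply: functional_extensionality => x.
rewrite op1_proj [in RHS](bigD1 j) //= inE eqxx /=.
set P := \prod_(i | i != j) _.
have Pj k : \prod_i (if i \in l then v i (upd x (I j) k (I i)) * \sum_k0 (v i k0)^* * g i k0
                    else g i (upd x (I j) k (I i))) = g j k * P.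
  rewrite (bigD1 j) //= (negbTE hjl) upd_at; congr (_ * _).
  by apply: eq_bigr => i hij; rewrite inE (negbTE hij) /= upd_ne ?(inj_eq I_inj).
under eq_bigr => k _ do rewrite hh Pj.
rewrite (eq_bigr (fun k => h x * P * ((v j k)^* * g j k))) => [|k _]; last by ring.
by rewrite -mulr_sumr; ring.
Qed.

Lemma sum_delta_prod (n : nat) (F : cfg d 'I_n -> C) (y l : 'I_n -> 'Z_d) :
  \sum_b F b * \prod_i (y i == b i + l i)%:R = F [ffun i => y i - l i].
Proof.
rewrite (bigD1 [ffun i => y i - l i]) //= [X in _ + X]big1 => [|b hb].
  by rewrite addr0 big1 ?mulr1 // => i _; rewrite ffunE subrK eqxx.
have [i hi] : exists i, b i != y i - l i.
  apply/existsP; rewrite -negb_forall; apply: contra hb => /forallP h.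
  by apply/eqP/ffunP => i; rewrite ffunE; apply/eqP.
rewrite (bigD1 i) //= (_ : (y i == _) = false) ?mul0r ?mulr0 //.
by apply: contraNF hi => /eqP ->; rewrite addrK.
Qed.

Lemma xst_conj_sum (s b l x : 'Z_d) :
  \sum_k (@xst R d s k)^* * ((k == b + l)%:R * qexp (- x * k)) =
  (sqrtC (d%:R : C))^-1 * qexp ((- x - s) * b) * qexp ((- x - s) * l).
Proof.
rewrite (eq_bigr (fun k => (k == b + l)%:R * ((@xst R d s k)^* * qexp (- x * k)))); last first.
  by move=> k _; ring.
rewrite sum_delta_r /xst rmorphM /= geC0_conj ?invr_ge0 ?sqrtC_ge0 ?ler0n //.
rewrite -(qexpM s (b + l)) qexp_conj -mulrA -qexpD -mulrA -qexpD.
by congr (_ * qexp _); ring.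
Qed.

Section USigmaCoordinates.
Variables (n : nat) (lx lz s : 'I_n -> 'Z_d).

Lemma iter_op1_X (i : 'I_n) k (f : vec R d 'I_n) b :
  iter k (op1 i (@Xm R d)) f b = f (upd b i (b i + k%:R)).
Proof.
elim: k b => [|k IH] b /=; first by rewrite addr0 upd_id.
rewrite op1_X IH upd_upd upd_at -addrA -[k.+1]addn1 natrD.
by rewrite [1 + _]addrC.
Qed.

Lemma iter_op1_Z (i : 'I_n) k (f : vec R d 'I_n) b :
  iter k (op1 i (@Zm R d)) f b = qexp (b i) ^+ k * f b.
Proof.
elim: k => [|k IH] /=; first by rewrite expr0 mul1r.
by rewrite op1_Z IH exprS mulrA.
Qed.

Lemma USigmaE (psin : vec R d 'I_n) b :
  USigma lx lz s psin b = (\prod_i qexp ((- lx i - s i) * b i)) * psin [ffun j => b j + lz j].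
Proof.
suff gen (l : seq 'I_n) c : uniq l ->
  foldr (fun i f => iter (- lx i - s i)%R (op1 i (@Zm R d)) (iter (lz i) (op1 i (@Xm R d)) f))
    psin l c = (\prod_(i <- l) qexp ((- lx i - s i) * c i))
               * psin [ffun j => if j \in l then c j + lz j else c j].
  rewrite /USigma gen ?enum_uniq // big_enum /=.
  by congr (_ * psin _); apply/ffunP => j; rewrite !ffunE mem_enum.
elim: l c => [|i l IH] c.
  by move=> _; rewrite big_nil mul1r; congr psin; apply/ffunP => j; rewrite !ffunE.
move=> /andP [hil hl]; cbn [foldr].
rewrite iter_op1_Z iter_op1_X IH // big_cons qexpXn natr_Zp mulrA [c i * _]mulrC.
congr (_ * _ * _).
  by apply: eq_big_seq => j hj; rewrite upd_ne //; apply: contraNneq hil => <-.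
congr psin; apply/ffunP => j; rewrite !ffunE inE.
by case: (eqVneq j i) => [->|] /=; rewrite ?(negbTE hil) ?natr_Zp.
Qed.

End USigmaCoordinates.

Lemma Sop_embed_in (n : nat) (V : finType) (E : {set {set V}}) (I : 'I_n -> V)
    (CM CO : {set V}) (psin : vec R d 'I_n) :
  let r := (sqrtC (d%:R : C))^-1 in
  Sop E (embed_in I CM CO psin) =
  fun x => r ^+ #|CM :|: CO| / r ^+ #|V| * psin [ffun i => x (I i)] * cluster R E x.
Proof.
move=> r; apply: functional_extensionality => x.
have r_neq0 : r != 0 by rewrite invr_eq0 sqrtC_eq0 pnatr_eq0.
rewrite /Sop /embed_in /cluster /Sop /plusV.
have prod_xst0 (A : {pred V}) : \prod_(a in A) @xst R d 0 (x a) = r ^+ #|A|.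
  by rewrite -prodr_const; apply: eq_bigr => a _; rewrite /xst mul0n expr0 mulr1.
rewrite prod_xst0 (prod_xst0 predT) (_ : #|predT| = #|V|) //.
by field; exact: expf_neq0.
Qed.

Section Readout.
Variables (n : nat) (V : finType) (CI CM CO : {set V}) (I O : 'I_n -> V).
Hypotheses (hIM : [disjoint CI & CM]) (hIO : [disjoint CI & CO])
  (hMO : [disjoint CM & CO]) (hcover : CI :|: CM :|: CO = [set: V])
  (I_inj : injective I) (O_inj : injective O)
  (hI : [set I i | i : 'I_n] = CI) (hO : [set O i | i : 'I_n] = CO).
Implicit Types (x y z : cfg d V) (rho : 'I_n -> 'Z_d).
Local Notation prI x := [ffun i => x (I i)].
Local Notation prO x := [ffun i => x (O i)].

Let I_in i : I i \in CI. Proof. by rewrite -hI imset_f. Qed.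
Let O_in i : O i \in CO. Proof. by rewrite -hO imset_f. Qed.

Lemma I_neq_O i j : I i != O j.
Proof. by apply: contraTneq (O_in j) => <-; rewrite (disjointFr hIO (I_in i)). Qed.

Lemma O_neq_I i j : O i != I j.
Proof. by rewrite eq_sym I_neq_O. Qed.

Lemma I_neq_CM i a : a \in CM -> I i != a.
Proof. by apply: contraTneq => <-; rewrite (disjointFr hIM (I_in i)). Qed.

Lemma O_neq_CM i a : a \in CM -> O i != a.
Proof. by apply: contraTneq => <-; rewrite (disjointFl hMO (O_in i)). Qed.

Lemma notin_CM b : b \notin CM -> (exists i, I i = b) \/ (exists i, O i = b).
Proof.
move=> hb; have : b \in [set: V] by [].
rewrite -hcover !inE (negbTE hb) orbF -hI -hO.
by case/orP => /imsetP [i _ ->]; [left | right]; exists i.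
Qed.

Lemma cfg_eq_IO x y : (forall i, x (I i) = y (I i)) -> (forall i, x (O i) = y (O i)) ->
  (forall a, a \in CM -> x a = y a) -> x = y.
Proof.
move=> hxyI hxyO hxyM; apply/ffunP => b; have [/hxyM //|/notin_CM] := boolP (b \in CM).
by case=> [[i <-]|[i <-]].
Qed.

Variables (lx lz : 'I_n -> 'Z_d).

Definition shiftIO rho z : cfg d V :=
  updO I (updO O z [ffun i => z (O i) + rho i]) [ffun i => z (I i) + rho i].
Definition normIO z : cfg d V :=
  updO I (updO O z [ffun i => - lz i]) [ffun _ => 0].

Lemma shiftIO_I rho z i : shiftIO rho z (I i) = z (I i) + rho i.
Proof. by rewrite /shiftIO (updO_at I_inj) ffunE. Qed.
Lemma shiftIO_O rho z i : shiftIO rho z (O i) = z (O i) + rho i.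
Proof. by rewrite /shiftIO (updO_out _ _ (I_neq_O^~ i)) (updO_at O_inj) ffunE. Qed.
Lemma shiftIO_CM rho z a : a \in CM -> shiftIO rho z a = z a.
Proof. by move=> ha; rewrite /shiftIO !updO_out // => i; [apply: O_neq_CM | apply: I_neq_CM]. Qed.

Lemma normIO_I z i : normIO z (I i) = 0.
Proof. by rewrite /normIO (updO_at I_inj) ffunE. Qed.
Lemma normIO_O z i : normIO z (O i) = - lz i.
Proof. by rewrite /normIO (updO_out _ _ (I_neq_O^~ i)) (updO_at O_inj) ffunE. Qed.
Lemma normIO_CM z a : a \in CM -> normIO z a = z a.
Proof. by move=> ha; rewrite /normIO !updO_out // => i; [apply: O_neq_CM | apply: I_neq_CM]. Qed.

Lemma shiftIO_add rho rho' z :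
  shiftIO rho (shiftIO rho' z) = shiftIO (fun i => rho' i + rho i) z.
Proof.
by apply: cfg_eq_IO => [i|i|a ha]; rewrite ?shiftIO_I ?shiftIO_O ?shiftIO_CM ?addrA.
Qed.

Lemma shiftIO0 z : shiftIO (fun _ => 0) z = z.
Proof.
by apply: cfg_eq_IO => [i|i|a ha]; rewrite ?shiftIO_I ?shiftIO_O ?shiftIO_CM ?addr0.
Qed.

Variables (u : V -> mat R 'Z_d) (sM : V -> 'Z_d).
Local Notation m x := (\prod_(a in CM) u a (x a) (sM a)).

Lemma prod_CM_updO x (b : cfg d 'I_n) : m (updO O x b) = m x.
Proof. by apply: eq_bigr => a ha; rewrite updO_out // => i; apply: O_neq_CM. Qed.

Lemma prod_CM_upd_I x i k : m (upd x (I i) k) = m x.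
Proof. by apply: eq_bigr => a ha; rewrite upd_ne // eq_sym I_neq_CM. Qed.

Section Stabilized.
Variable eta : vec R d V.
Hypothesis eta_X : forall i,
  op1 (I i) (@Xm R d) (op1 (O i) (@Xm R d) eta) = fun x => (q ^+ lx i)^-1 * eta x.
Hypothesis eta_Z : forall i,
  op1 (I i) (adjm (@Zm R d)) (op1 (O i) (@Zm R d) eta) = fun x => (q ^+ lz i)^-1 * eta x.

Lemma eta_shift1 i z : eta (shiftIO (fun j => (j == i)%:R) z) = qexp (- lx i) * eta z.
Proof.
have := congr1 (fun f => f z) (eta_X i); rewrite /= -qexpN !op1_X => <-.
congr eta; apply: cfg_eq_IO => [j|j|a ha].
- rewrite shiftIO_I upd_ne ?I_neq_O //.
  have [->|hji] := eqVneq j i; first by rewrite upd_at.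
  by rewrite upd_ne ?(inj_eq I_inj) // addr0.
- rewrite shiftIO_O; have [->|hji] := eqVneq j i; first by rewrite upd_at upd_ne ?O_neq_I.
  by rewrite !upd_ne ?(inj_eq O_inj) ?O_neq_I ?addr0.
- by rewrite shiftIO_CM // !upd_ne // eq_sym ?O_neq_CM ?I_neq_CM.
Qed.

Lemma eta_shift_at i k z :
  eta (shiftIO (fun j => if j == i then k%:R else 0) z) = qexp (- lx i) ^+ k * eta z.
Proof.
elim: k => [|k IH].
  rewrite expr0 mul1r (_ : (fun j => _) = fun _ => 0) ?shiftIO0 //.
  by apply: functional_extensionality => j; case: eqP.
rewrite exprS -mulrA -IH -eta_shift1 shiftIO_add; congr (eta (shiftIO _ z)).
apply: functional_extensionality => j; rewrite -[k.+1]addn1 natrD.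
by case: eqP; rewrite ?addr0.
Qed.

Lemma eta_shift rho z : eta (shiftIO rho z) = (\prod_i qexp (- lx i * rho i)) * eta z.
Proof.
suff gen (l : seq 'I_n) : uniq l -> forall rho, (forall i, i \notin l -> rho i = 0) ->
    forall z, eta (shiftIO rho z) = (\prod_(i <- l) qexp (- lx i * rho i)) * eta z.
  have := gen (enum 'I_n) (enum_uniq _) rho _ z; rewrite big_enum /=; apply=> i.
  by rewrite mem_enum.
elim: l => [|j l IH] /=.
  move=> _ {}rho h {}z; rewrite big_nil mul1r (_ : rho = fun _ => 0) ?shiftIO0 //.
  by apply: functional_extensionality => i; exact: h.
move=> /andP [hjl hl] {}rho h {}z.
pose rho' i := if i == j then 0 else rho i.
have -> : shiftIO rho z =
    shiftIO (fun i => if i == j then (rho j : nat)%:R else 0) (shiftIO rho' z).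
  rewrite shiftIO_add; congr shiftIO; apply: functional_extensionality => i.
  by rewrite /rho'; case: eqP => [->|]; rewrite ?natr_Zp ?add0r ?addr0.
rewrite eta_shift_at IH // => [|i hi]; last first.
  by rewrite /rho'; case: eqP => // /eqP hij; apply: h; rewrite inE negb_or hij.
rewrite big_cons mulrA qexpXn natr_Zp; congr (_ * _ * _).
apply: eq_big_seq => i hi; rewrite /rho'; case: eqP => // hij.
by move: hjl; rewrite -hij hi.
Qed.

Lemma eta_reduce z : eta z = if [forall i, z (O i) == z (I i) - lz i]
  then (\prod_i qexp (- lx i * z (I i))) * eta (normIO z) else 0.
Proof.
pose w := shiftIO (fun i => - z (I i)) z.
have wI i : w (I i) = 0 by rewrite shiftIO_I addrN.
have wO i : w (O i) = z (O i) - z (I i) by rewrite shiftIO_O.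
have zE : shiftIO (fun i => z (I i)) w = z.
  rewrite shiftIO_add -[RHS]shiftIO0; congr shiftIO.
  by apply: functional_extensionality => i; rewrite addNr.
rewrite -{1}zE eta_shift; case: ifP => [/forallP hall|/negbT].
  congr (_ * eta _); apply: cfg_eq_IO => [i|i|a ha].
  - by rewrite wI normIO_I.
  - by rewrite wO normIO_O (eqP (hall i)) addrAC subrr add0r.
  - by rewrite normIO_CM // shiftIO_CM.
rewrite negb_forall => /existsP [i /eqP hi].
suff -> : eta w = 0 by rewrite mulr0.
have := congr1 (fun f => f w) (eta_Z i); rewrite /= op1_adjZ op1_Z wI oppr0 qexp0 mul1r.
rewrite -qexpN => /eqP; rewrite -subr_eq0 -mulrBl mulf_eq0 subr_eq0.
case/orP => [/eqP /qexp_inj|/eqP //]; rewrite wO => h.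
by case: hi; rewrite -h addrC subrK.
Qed.

Lemma liftO_eta_closed (U : mat R (cfg d 'I_n)) (c0 : C) :
  (forall z, eta (normIO z) = c0 * m z) ->
  forall y, liftO O U eta y =
    c0 * m y * (\prod_i qexp (- lx i * y (I i))) * U (prO y) [ffun i => y (I i) - lz i].
Proof.
move=> hc0 y; rewrite /liftO.
rewrite (eq_bigr (fun b => (b == [ffun i => y (I i) - lz i])%:R *
    (c0 * m y * (\prod_i qexp (- lx i * y (I i))) * U (prO y) b))) ?sum_delta_r // => b _.
rewrite eta_reduce hc0 prod_CM_updO.
have -> : [forall i, updO O y b (O i) == updO O y b (I i) - lz i] =
          (b == [ffun i => y (I i) - lz i]).
  have yI b' i : updO O y b' (I i) = y (I i) by rewrite (updO_out _ _ (O_neq_I^~ i)).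
  apply/forallP/eqP => [h|-> i]; last by rewrite (updO_at O_inj) yI ffunE.
  by apply/ffunP => i; rewrite ffunE -(updO_at O_inj y b i) (eqP (h i)) yI.
under eq_bigr => i _ do rewrite (updO_out _ _ (O_neq_I^~ i)).
by case: eqP => _; rewrite ?mul0r ?mulr0 // mul1r; ring.
Qed.

End Stabilized.

Lemma Pop_normIO (w : vec R d V) : exists c0, forall z, Pop CM u sM w (normIO z) = c0 * m z.
Proof.
have [K [hK hw]] := opfam_proj_factor (fun a k => u a k (sM a)) w (enum_uniq (mem CM)).
exists (K (normIO [ffun _ => 0])) => z; rewrite /Pop hw big_enum mulrC; congr (_ * _).
  apply: hK => b; rewrite mem_enum => /notin_CM [[i <-]|[i <-]].
    by rewrite !normIO_I.
  by rewrite !normIO_O.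
by apply: eq_bigr => a ha; rewrite normIO_CM.
Qed.

Lemma Pop_closed_form (U : mat R (cfg d 'I_n)) (phi : vec R d V) : unitary U ->
  (exists x, Pop CM u sM phi x != 0) ->
  (forall i, op1 (I i) (@Xm R d)
     (liftO O (matof (fun f => mxop U (op1 i (@Xm R d) (mxop (adjm U) f)))) (Pop CM u sM phi))
   = fun x => (q ^+ lx i)^-1 * Pop CM u sM phi x) ->
  (forall i, op1 (I i) (adjm (@Zm R d))
     (liftO O (matof (fun f => mxop U (op1 i (@Zm R d) (mxop (adjm U) f)))) (Pop CM u sM phi))
   = fun x => (q ^+ lz i)^-1 * Pop CM u sM phi x) ->
  exists2 c0, c0 != 0 & forall y, Pop CM u sM phi y =
    c0 * m y * (\prod_i qexp (- lx i * y (I i))) * U (prO y) [ffun i => y (I i) - lz i].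
Proof.
move=> hU [x0 hx0] hX hZ; set psi := Pop CM u sM phi in hx0 hX hZ *.
have eta_X i := liftO_stabilizer O_inj hU (O_neq_I^~ i) (hX i).
have eta_Z i := liftO_stabilizer O_inj hU (O_neq_I^~ i) (hZ i).
have [c0 hc0] : exists c0, forall z, liftO O (adjm U) psi (normIO z) = c0 * m z.
  rewrite /psi /Pop liftO_opfam => [|a i]; first exact: Pop_normIO.
  by rewrite mem_enum => /O_neq_CM.
have psiE y : psi y = c0 * m y * (\prod_i qexp (- lx i * y (I i)))
                      * U (prO y) [ffun i => y (I i) - lz i].
  by rewrite -(liftO_unitaryK O_inj psi hU) (liftO_eta_closed eta_X eta_Z U hc0).
exists c0 => //; apply: contraNneq hx0 => c00.
by rewrite psiE c00 !mul0r.
Qed.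

Lemma Pop_mull_I (h : cfg d 'I_n -> C) (w : vec R d V) :
  Pop CM u sM (fun x => h (prI x) * w x) = fun x => h (prI x) * Pop CM u sM w x.
Proof.
apply: opfam_mull => a x k; rewrite mem_enum => ha; congr h.
by apply/ffunP => i; rewrite !ffunE (negbTE (I_neq_CM i ha)).
Qed.

Lemma project_inputs (U : mat R (cfg d 'I_n)) (psi : vec R d V) (c0 k : C)
    (s : 'I_n -> 'Z_d) (psin : vec R d 'I_n) :
  (forall y, psi y =
    c0 * m y * (\prod_i qexp (- lx i * y (I i))) * U (prO y) [ffun i => y (I i) - lz i]) ->
  opfam (enum 'I_n) I (fun i => projm (@xst R d (s i))) (fun y => k * psin (prI y) * psi y) =
  fun x => k * c0 * (\prod_i ((sqrtC (d%:R : C))^-1 * qexp ((- lx i - s i) * lz i))) *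
    ((\prod_i @xst R d (s i) (x (I i))) * m x * mxop U (USigma lx lz s psin) (prO x)).
Proof.
move=> hpsi.
pose hb b y := k * c0 * m y * U (prO y) b * psin [ffun j => b j + lz j].
pose gb b i t := (t == b i + lz i)%:R * qexp (- lx i * t).
have -> : (fun y => k * psin (prI y) * psi y) =
          fun y => \sum_b hb b y * \prod_i gb b i (y (I i)).
  apply: functional_extensionality => y.
  rewrite (eq_bigr (fun b => hb b y * (\prod_i qexp (- lx i * y (I i)))
                            * \prod_i (y (I i) == b i + lz i)%:R)) => [|b _]; last first.
    by rewrite /gb big_split /=; ring.
  rewrite (sum_delta_prod (fun b => hb b y * _) (fun i => y (I i))) hpsi /hb.
  have -> : [ffun j => [ffun i => y (I i) - lz i] j + lz j] = prI y.
    by apply/ffunP => j; rewrite !ffunE subrK.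
  ring.
have hb_I b i y t : hb b (upd y (I i) t) = hb b y.
  by rewrite /hb prod_CM_upd_I prO_upd // => j; rewrite O_neq_I.
rewrite opfam_sum; apply: functional_extensionality => x; rewrite /mxop !mulr_sumr.
apply: eq_bigr => b _; rewrite (opfam_proj_prod I_inj _ _ (enum_uniq _) (hb_I b)).
under eq_bigr => i _ do rewrite mem_enum /gb xst_conj_sum.
by rewrite USigmaE /hb !big_split /=; ring.
Qed.

End Readout.

End Qudit.

Theorem theorem2
  (R : realType) (d : nat) (hd : (1 < d)%N) (n : nat)
  (V : finType) (E : {set {set V}}) (hE : forall e, e \in E -> #|e| = 2%N)
  (CI CM CO : {set V})
  (hIM : [disjoint CI & CM]) (hIO : [disjoint CI & CO]) (hMO : [disjoint CM & CO])
  (hcover : CI :|: CM :|: CO = [set: V])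
  (I O : 'I_n -> V) (hIinj : injective I) (hOinj : injective O)
  (hI : [set I i | i : 'I_n] = CI) (hO : [set O i | i : 'I_n] = CO)
  (u : V -> mat R 'Z_d) (hu : forall a, a \in CM -> unitary (u a))
  (sM : V -> 'Z_d)
  (U : mat R (cfg d 'I_n)) (hU : unitary U)
  (lx lz : 'I_n -> 'Z_d)
  (hpsi : exists x, Pop CM u sM (cluster R E) x != 0)
  (hX : forall i : 'I_n,
     op1 (I i) (@Xm R d)
       (liftO O (matof (fun w => mxop U (op1 i (@Xm R d) (mxop (adjm U) w))))
          (Pop CM u sM (cluster R E)))
     = fun x => (qroot R d ^+ lx i)^-1 * Pop CM u sM (cluster R E) x)
  (hZ : forall i : 'I_n,
     op1 (I i) (adjm (@Zm R d))
       (liftO O (matof (fun w => mxop U (op1 i (@Zm R d) (mxop (adjm U) w))))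
          (Pop CM u sM (cluster R E)))
     = fun x => (qroot R d ^+ lz i)^-1 * Pop CM u sM (cluster R E) x) :
  forall s : 'I_n -> 'Z_d,
  exists c : complex R, c != 0 /\
  forall psin : vec R d 'I_n,
    opfam (enum 'I_n) I (fun i => projm (@xst R d (s i)))
      (Pop CM u sM (Sop E (embed_in I CM CO psin)))
    = fun x => c * ((\prod_(i : 'I_n) @xst R d (s i) (x (I i)))
                    * (\prod_(a in CM) u a (x a) (sM a))
                    * mxop U (USigma lx lz s psin) [ffun i => x (O i)]).
Proof.
have [p hp] : exists p, d = p.+2.
  by exists d.-2; case: d hd {hX hZ hpsi u hu sM U hU lx lz} => [|[|d]].
subst d => s.
have [c0 c0_neq0 psiE] := Pop_closed_form hIM hIO hMO hcover hIinj hOinj hI hO hU hpsi hX hZ.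
set r : complex R := (sqrtC (p.+2%:R : complex R))^-1.
have r_neq0 : r != 0 by rewrite invr_eq0 sqrtC_eq0 pnatr_eq0.
set kap := r ^+ #|CM :|: CO| / r ^+ #|V|.
exists (kap * c0 * \prod_i (r * qexp R ((- lx i - s i) * lz i))); split.
  rewrite !mulf_neq0 ?invr_eq0 ?expf_neq0 //.
  by apply/prodf_neq0 => i _; rewrite mulf_neq0 ?qexp_neq0.
move=> psin; rewrite Sop_embed_in (Pop_mull_I hIM hI u sM (fun b => kap * psin b)).
by rewrite (project_inputs hIM hIO hIinj hI hO kap s psin psiE).
Qed.
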